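(* Let $(S,\alpha)$ be a twisted K3 surface, $d=\mathrm{ord}(\alpha)$, $B$ a B-field lift of $\alpha$, and $\lambda:(D_{\widetilde{NS}(S,B)},q)\cong(D_{T(S,B)},-q)$ the natural isometry. Then $(0,0,-\tfrac1d)\in\widetilde{NS}(S,B)^\vee$, and if $y\in T(S,B)^\vee$ represents $\lambda([(0,0,-\tfrac1d)])$, the map $e^B$ restricts to a Hodge isometry $$e^B:T(S)\xrightarrow{\ \sim\ }\langle T(S,B),\,y\rangle\subset T(S,B)^\vee .$$ Moreover, the surjection $\alpha:T(S)\to\mathbb Z/d\mathbb Z$ coincides with the composite $T(S)\xrightarrow{e^B}\langle T(S,B),y\rangle/T(S,B)=\langle [y]\rangle\cong\mathbb Z/d\mathbb Z$, where $[y]\mapsto \bar 1$.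
   Context: $S$ is a complex projective K3 surface with $NS(S)$, $T(S)=NS(S)^\perp\subset H^2(S,\mathbb Z)$ and holomorphic 2-form class $\omega_S$. Mukai lattice $\widetilde H(S,\mathbb Z)=H^0\oplus H^2\oplus H^4$, elements $(a,l,b)$, pairing $((a,l,b),(a',l',b'))=(l,l')-ab'-a'b$. For $B\in H^2(S,\mathbb Q)$, $e^B(a,l,b)=(a,l+aB,b+(B,l)+\frac a2(B,B))$. $\mathrm{Br}(S)\cong H^2(S,\mathbb Q)/(NS(S)_{\mathbb Q}+H^2(S,\mathbb Z))\cong \mathrm{Hom}(T(S),\mathbb Q/\mathbb Z)$, the second isomorphism sending the class of $B$ to $t\mapsto (B,t)\bmod\mathbb Z$; thus $\alpha$ of order $d$ is identified with a surjection $T(S)\to \frac1d\mathbb Z/\mathbb Z\cong\mathbb Z/d\mathbb Z$. A B-field lift of $\alpha$ is a preimage $B\in H^2(S,\mathbb Q)$. The twisted Mukai lattice $\widetilde H(S,B,\mathbb Z)$ is $\widetilde H(S,\mathbb Z)$ with Hodge structure of weight two with $(2,0)$-part $\mathbb C e^B(\omega_S)$; $\widetilde{NS}(S,B)=e^B(\omega_S)^\perp\cap\widetilde H(S,\mathbb Z)$ and $T(S,B)$ is its orthogonal complement in $\widetilde H(S,\mathbb Z)$, with induced Hodge structure; $T(S)$ has its Hodge structure from $H^2(S)$. For an even lattice $L$, $D_L=L^\vee/L$ with $q(x)=(x,x)\bmod 2\mathbb Z$. The natural isometry $\lambda$ sends $[x]$, $x\in\widetilde{NS}(S,B)^\vee$,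 to $[y]$ where $y\in T(S,B)^\vee$ satisfies $x+y\in\widetilde H(S,\mathbb Z)$. *)

From HB Require Import structures.
From mathcomp Require Import all_boot all_order all_algebra.
Set Implicit Arguments. Unset Strict Implicit. Unset Printing Implicit Defensive.
Import Order.TTheory GRing.Theory Num.Theory.
Local Open Scope ring_scope.

(* ---------- The K3 lattice  U^3 + E8(-1)^2  (Gram matrix of H^2(S,Z)) ---- *)
Definition e8edge (i j : nat) : bool :=
  ((i.+1 == j) && (j <= 6)%N) || ((i == 2%N) && (j == 7%N)).
Definition e8cartan (i j : nat) : int :=
  if i == j then 2 else if e8edge i j || e8edge j i then -1 else 0.
Definition k3gram_nat (i j : nat) : int :=
  if (i < 6)%N && (j < 6)%N then (if (i./2 == j./2) && (i != j) then 1 else 0)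
  else if [&& (6 <= i)%N, (i < 14)%N, (6 <= j)%N & (j < 14)%N]
       then - e8cartan (i - 6) (j - 6)
  else if [&& (14 <= i)%N, (i < 22)%N, (14 <= j)%N & (j < 22)%N]
       then - e8cartan (i - 14) (j - 14)
  else 0.
Definition K3gram : 'M[int]_22 := \matrix_(i < 22, j < 22) k3gram_nat i j.

Definition k3form (R : nzRingType) (u v : 'rV[R]_22) : R :=
  (u *m map_mx (fun z : int => z%:~R) K3gram *m v^T) 0 0.

Definition mvec (R : Type) := (R * 'rV[R]_22 * R)%type.
Definition mpair (R : nzRingType) (v w : mvec R) : R :=
  k3form v.1.2 w.1.2 - v.1.1 * w.2 - w.1.1 * v.2.
Definition madd (R : nzRingType) (v w : mvec R) : mvec R :=
  (v.1.1 + w.1.1, v.1.2 + w.1.2, v.2 + w.2).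
Definition mscale (R : nzRingType) (k : R) (v : mvec R) : mvec R :=
  (k * v.1.1, k *: v.1.2, k * v.2).
Definition mmap (R S : nzRingType) (f : R -> S) (v : mvec R) : mvec S :=
  (f v.1.1, map_mx f v.1.2, f v.2).
Definition eB (R : fieldType) (B : 'rV[R]_22) (v : mvec R) : mvec R :=
  (v.1.1, v.1.2 + v.1.1 *: B, v.2 + k3form B v.1.2 + v.1.1 / 2 * k3form B B).

Definition isZ (x : rat) : Prop := x \is a Num.int.
Definition zvec (l : 'rV[rat]_22) : Prop := forall i, isZ (l 0 i).
Definition mukZ (v : mvec rat) : Prop := [/\ isZ v.1.1, zvec v.1.2 & isZ v.2].

(* om is the class of the holomorphic 2-k3form of a projective K3 surface *)
Definition K3_period (C : numClosedFieldType) (om : 'rV[C]_22) : Prop :=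
  [/\ k3form om om = 0, 0 < k3form om (map_mx Num.conj om) &
      exists h : 'rV[rat]_22, (forall i, isZ (h 0 i)) /\
        k3form (map_mx ratr h) om = 0 /\ 0 < k3form h h].

Definition NS (C : numClosedFieldType) (om : 'rV[C]_22) (l : 'rV[rat]_22) : Prop :=
  zvec l /\ k3form (map_mx ratr l) om = 0.
Definition Tr (C : numClosedFieldType) (om : 'rV[C]_22) (t : 'rV[rat]_22) : Prop :=
  zvec t /\ forall m, NS om m -> k3form t m = 0.

Definition eBom (C : numClosedFieldType) (om : 'rV[C]_22) (B : 'rV[rat]_22) : mvec C :=
  eB (map_mx ratr B) (0, om, 0).

Definition NSt (C : numClosedFieldType) (om : 'rV[C]_22) (B : 'rV[rat]_22)
  (v : mvec rat) : Prop :=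
  mukZ v /\ mpair (mmap ratr v) (eBom om B) = 0.
Definition Tt (C : numClosedFieldType) (om : 'rV[C]_22) (B : 'rV[rat]_22)
  (v : mvec rat) : Prop :=
  mukZ v /\ forall w, NSt om B w -> mpair v w = 0.

(* dual lattice M^vee inside M (x) Q  (M (x) Q = {x | n x \in M, some n > 0}) *)
Definition dual (M : mvec rat -> Prop) (x : mvec rat) : Prop :=
  (exists n : nat, (0 < n)%N /\ M (mscale n%:R x)) /\
  forall m, M m -> isZ (mpair x m).

Definition span_with (M : mvec rat -> Prop) (y v : mvec rat) : Prop :=
  exists u (k : int), M u /\ v = madd u (mscale k%:~R y).

(* ord(alpha) = d, where alpha = [B] in Br(S) = Hom(T(S), Q/Z), t |-> (B,t) mod Z *)
Definition br_order (C : numClosedFieldType) (om : 'rV[C]_22) (B : 'rV[rat]_22)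
  (d : nat) : Prop :=
  [/\ (0 < d)%N,
      forall t, Tr om t -> isZ (d%:R * k3form B t) &
      forall k : nat, (0 < k < d)%N -> exists t, Tr om t /\ ~ isZ (k%:R * k3form B t)].

Definition eBT (B : 'rV[rat]_22) (t : 'rV[rat]_22) : mvec rat := eB B (0, t, 0).

Definition x0 (d : nat) : mvec rat := (0, 0, - (d%:R)^-1).

From HB Require Import structures.
From mathcomp Require Import all_boot all_order all_algebra.
Set Implicit Arguments. Unset Strict Implicit. Unset Printing Implicit Defensive.
Import Order.TTheory GRing.Theory Num.Theory.
Local Open Scope ring_scope.

(* Write
   [P B l = (0, l, (B,l)) = e^B(0,l,0)].  Since NS~(S,B) contains (0,0,1),
   the vectors (0,m,0) for m in NS(S), and a multiple of (1,B,0), a Mukai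
   vector orthogonal to NS~(S,B) is exactly some [P B l] with l orthogonal
   to NS(S); hence T(S,B) = { P B l | l integral, (B,l) in Z, l _|_ NS(S) }.  These give (0,0,-1/d) in NS~(S,B)^vee
   and show that the admissible representatives y are [P B yl] with yl
   integral, yl _|_ NS(S) and (B,yl) = 1/d mod Z. *)

Lemma e8cartan_sym i j : e8cartan i j = e8cartan j i.
Proof. by rewrite /e8cartan eq_sym orbC. Qed.

Lemma k3gram_nat_sym i j : k3gram_nat i j = k3gram_nat j i.
Proof.
have swap4 (a b c e : bool) : [&& a, b, c & e] = [&& c, e, a & b].
  by case: a; case: b; case: c; case: e.
rewrite /k3gram_nat andbC [i./2 == _]eq_sym (eq_sym i j).
by rewrite (swap4 (6 <= i)%N) (swap4 (14 <= i)%N) e8cartan_sym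
  [e8cartan (j - 14) _]e8cartan_sym.
Qed.

Lemma K3gram_tr : K3gram^T = K3gram.
Proof. by apply/matrixP => i j; rewrite !mxE k3gram_nat_sym. Qed.

Section Form.
Variable R : comNzRingType.
Implicit Types u v w : 'rV[R]_22.

Lemma k3formDl u v w : k3form (u + v) w = k3form u w + k3form v w.
Proof. by rewrite /k3form !mulmxDl mxE. Qed.

Lemma k3formZl a u w : k3form (a *: u) w = a * k3form u w.
Proof. by rewrite /k3form -!scalemxAl mxE. Qed.

Lemma k3form_sym u v : k3form u v = k3form v u.
Proof.
have tr11 (A : 'M[R]_1) : A 0 0 = A^T 0 0 by rewrite [RHS]mxE.
by rewrite /k3form tr11 !trmx_mul trmxK map_trmx K3gram_tr mulmxA.
Qed.

Lemma k3formDr u v w : k3form w (u + v) = k3form w u + k3form w v.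
Proof. by rewrite !(k3form_sym w) k3formDl. Qed.

Lemma k3formZr a u w : k3form w (a *: u) = a * k3form w u.
Proof. by rewrite !(k3form_sym w) k3formZl. Qed.

Lemma k3formBl u v w : k3form (u - v) w = k3form u w - k3form v w.
Proof. by rewrite k3formDl -scaleN1r k3formZl mulN1r. Qed.

Lemma k3formBr u v w : k3form w (u - v) = k3form w u - k3form w v.
Proof. by rewrite !(k3form_sym w) k3formBl. Qed.

Lemma k3form0l w : k3form 0 w = 0.
Proof. by rewrite -(scale0r 0) k3formZl mul0r. Qed.

Lemma k3form0r w : k3form w 0 = 0.
Proof. by rewrite k3form_sym k3form0l. Qed.

End Form.

Lemma zvecD u v : zvec u -> zvec v -> zvec (u + v).
Proof. by move=> Hu Hv i; rewrite mxE; exact: rpredD (Hu i) (Hv i). Qed.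

Lemma zvecZ (k : int) u : zvec u -> zvec (k%:~R *: u).
Proof. by move=> Hu i; rewrite mxE; exact: rpredM (intr_int _ _) (Hu i). Qed.

Lemma zvecZn (k : nat) u : zvec u -> zvec (k%:R *: u).
Proof. by rewrite pmulrn; exact: zvecZ. Qed.

Lemma zvecB u v : zvec u -> zvec v -> zvec (u - v).
Proof. by move=> Hu Hv i; rewrite !mxE; exact: rpredB (Hu i) (Hv i). Qed.

Lemma zvec0 : zvec 0.
Proof. by move=> i; rewrite mxE; exact: rpred0. Qed.

Lemma k3form_int u v : zvec u -> zvec v -> isZ (k3form u v).
Proof.
move=> Hu Hv; rewrite /k3form mxE; apply: rpred_sum => j _; rewrite !mxE.
apply: rpredM (Hv _); apply: rpred_sum => k _.
by apply: rpredM (Hu _) _; rewrite mxE; exact: intr_int.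
Qed.

Lemma clear_denominators (x : 'rV[rat]_22) :
  exists N : nat, (0 < N)%N /\ zvec (N%:R *: x).
Proof.
exists (\prod_(i < 22) `|denq (x ord0 i)|)%N; split.
  by apply: prodn_gt0 => i; rewrite absz_gt0 denq_neq0.
move=> i; rewrite mxE (bigD1 i) //= natrM -mulrA mulrCA.
have -> : (`|denq (x ord0 i)|%N%:R : rat) * x 0 i = (numq (x ord0 i))%:~R.
  by rewrite numqE mulrC pmulrn absz_denq.
exact: rpredM (natr_int _ _) (intr_int _ _).
Qed.

Lemma isZ_div_dvd (a : int) (d : nat) :
  (0 < d)%N -> isZ (a%:~R / d%:R) -> (d%:Z %| a)%Z.
Proof.
move=> d_gt0 /intrP [m Hm]; have dn0 : (d%:R : rat) != 0 by rewrite pnatr_eq0 -lt0n.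
have -> : a = m * d%:Z.
  by apply/eqP; rewrite -(eqr_int rat) intrM -Hm -pmulrn mulfVK.
exact: dvdz_mull (dvdzz _).
Qed.

(* If a (B,t) is integral for every t in T(S), then ord(alpha) divides a:
   otherwise the remainder 0 < a mod d < d would kill alpha. *)
Lemma br_order_dvd (C : numClosedFieldType) (om : 'rV[C]_22) B d (a : int) :
  br_order om B d -> (forall t, Tr om t -> isZ (a%:~R * k3form B t)) ->
  (d%:Z %| a)%Z.
Proof.
case=> d_gt0 Hd Hord Ha; set r := (a %% d%:Z)%Z.
have r_ge0 : 0 <= r by rewrite modz_ge0 // eqz_nat -lt0n.
have [rn r_nat] : exists rn : nat, r = rn%:Z by exists `|r|%N; rewrite gez0_abs.
apply/dvdz_mod0P; rewrite -/r r_nat; case: (posnP rn) => [-> // | rn_gt0].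
have rn_lt : (rn < d)%N by rewrite -ltz_nat -r_nat ltz_pmod // ltz_nat.
have [t [Ht]] := Hord _ (introT andP (conj rn_gt0 rn_lt)); case.
have Ea : (a%:~R : rat) = (a %/ d%:Z)%Z%:~R * d%:R + rn%:R.
  by rewrite {1}(divz_eq a d%:Z) -/r r_nat intrD intrM -!pmulrn.
have -> : rn%:R * k3form B t
          = a%:~R * k3form B t - (a %/ d%:Z)%Z%:~R * (d%:R * k3form B t).
  by rewrite Ea mulrDl mulrA [RHS]addrC addKr.
exact: rpredB (Ha _ Ht) (rpredM (intr_int _ _) (Hd _ Ht)).
Qed.

Definition P (B l : 'rV[rat]_22) : mvec rat := (0, l, k3form B l).

Lemma eBT_P B t : eBT B t = P B t.
Proof. by rewrite /eBT /eB /P /= scale0r !mul0r !addr0 add0r. Qed.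

Lemma mpair_P B l (w : mvec rat) :
  mpair (P B l) w = k3form l w.1.2 - w.1.1 * k3form B l.
Proof. by rewrite /mpair /P /= mul0r subr0. Qed.

Lemma mpair_PP B l l' : mpair (P B l) (P B l') = k3form l l'.
Proof. by rewrite mpair_P /= mul0r subr0. Qed.

Lemma madd_P B l l' : madd (P B l) (P B l') = P B (l + l').
Proof. by rewrite /madd /P /= addr0 k3formDr. Qed.

Lemma mscale_P B (k : rat) l : mscale k (P B l) = P B (k *: l).
Proof. by rewrite /mscale /P /= mulr0 k3formZr. Qed.

Lemma mukZ_P B l : mukZ (P B l) <-> zvec l /\ isZ (k3form B l).
Proof. by split; [case | case; split => //; exact: rpred0]. Qed.

Lemma mpairZl (k : rat) v w : mpair (mscale k v) w = k * mpair v w.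
Proof.
rewrite /mpair /mscale /= k3formZl !mulrBr.
by congr (_ - _ - _); rewrite -?mulrA // mulrCA.
Qed.

Section TwistedLattices.
Variables (C : numClosedFieldType) (om : 'rV[C]_22) (B : 'rV[rat]_22).

Lemma mpair_eBom (w : mvec rat) :
  mpair (mmap ratr w) (eBom om B) = k3form (map_mx ratr (w.1.2 - w.1.1 *: B)) om.
Proof.
rewrite /mpair /eBom /eB /mmap /= scale0r !mul0r !addr0 add0r subr0.
by rewrite map_mxB map_mxZ k3formBl k3formZl.
Qed.

Lemma NSt_eq w :
  NSt om B w <-> mukZ w /\ k3form (map_mx ratr (w.1.2 - w.1.1 *: B)) om = 0.
Proof. by rewrite /NSt mpair_eBom. Qed.

Lemma NSt_H4 : NSt om B (0, 0, 1).
Proof.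
apply/NSt_eq; split; first by split; [exact: rpred0 | exact: zvec0 | exact: rpred1].
by rewrite /= scale0r subr0 map_mx0 k3form0l.
Qed.

Lemma NSt_NS m : NS om m -> NSt om B (0, m, 0).
Proof.
case=> Hm Hmo; apply/NSt_eq; split; first by split; rewrite ?rpred0.
by rewrite /= scale0r subr0.
Qed.

Lemma NSt_BField (N : nat) : zvec (N%:R *: B) -> NSt om B (N%:R, N%:R *: B, 0).
Proof.
move=> HB; apply/NSt_eq; split; first by split; [exact: natr_int | | exact: rpred0].
by rewrite /= subrr map_mx0 k3form0l.
Qed.

Definition perpNS (l : 'rV[rat]_22) := forall m, NS om m -> k3form l m = 0.

Lemma perpNSD l l' : perpNS l -> perpNS l' -> perpNS (l + l').
Proof. by move=> H H' m Hm; rewrite k3formDl H // H' // addr0. Qed.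

Lemma perpNSZ k l : perpNS l -> perpNS (k *: l).
Proof. by move=> H m Hm; rewrite k3formZl H // mulr0. Qed.

(* For (a,l,b) in NS~(S,B), the vector l - aB is rationally in NS(S). *)
Lemma perpNS_NSt l w : perpNS l -> NSt om B w -> k3form l (w.1.2 - w.1.1 *: B) = 0.
Proof.
move=> Hl /NSt_eq [_ Hw]; have [N [N_gt0 HN]] := clear_denominators (w.1.2 - w.1.1 *: B).
have : k3form l (N%:R *: (w.1.2 - w.1.1 *: B)) = 0.
  by apply: Hl; split => //; rewrite map_mxZ k3formZl Hw mulr0.
by rewrite k3formZr => /eqP; rewrite mulf_eq0 pnatr_eq0 (gtn_eqF N_gt0) => /eqP.
Qed.

Definition perpNSt (v : mvec rat) := forall w, NSt om B w -> mpair v w = 0.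

Lemma perpNSt_P l : perpNS l -> perpNSt (P B l).
Proof.
move=> Hl w Hw; rewrite mpair_P (k3form_sym B) -k3formZr -k3formBr.
exact: perpNS_NSt.
Qed.

Lemma perpNSt_perpNS l : perpNSt (P B l) -> perpNS l.
Proof. by move=> Hl m Hm; have := Hl _ (NSt_NS Hm); rewrite mpair_P /= mul0r subr0. Qed.

(* Pairing with (0,0,1) and with N(1,B,0) forces the shape (0, l, (B,l)). *)
Lemma perpNSt_shape v : perpNSt v -> v = P B v.1.2.
Proof.
case: v => [[a l] b] Hv.
have a0 : a = 0.
  have := Hv _ NSt_H4; rewrite /mpair /= k3form0r mulr1 mul0r subr0 sub0r.
  by move/eqP; rewrite oppr_eq0 => /eqP.
have [N [N_gt0 HN]] := clear_denominators B.
have := Hv _ (NSt_BField HN); rewrite /mpair /= a0 mulr0 subr0 k3formZr -mulrBr.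
move/eqP; rewrite mulf_eq0 pnatr_eq0 (gtn_eqF N_gt0) /= subr_eq0 => /eqP Hb.
by rewrite /P /= -Hb k3form_sym.
Qed.

Lemma Tt_P l : Tt om B (P B l) <-> [/\ zvec l, isZ (k3form B l) & perpNS l].
Proof.
split; first by case=> /mukZ_P [Hz Hi] /perpNSt_perpNS.
by case=> Hz Hi Hp; split; [exact/mukZ_P | exact: perpNSt_P].
Qed.

Lemma Tt_shape v : Tt om B v -> v = P B v.1.2.
Proof. by case=> _ /perpNSt_shape. Qed.

Lemma Tt_parts v : Tt om B v -> [/\ zvec v.1.2, isZ (k3form B v.1.2) & perpNS v.1.2].
Proof. by move=> Hv; apply/Tt_P; rewrite -Tt_shape. Qed.

Lemma mpair_eBT t t' : mpair (eBT B t) (eBT B t') = k3form t t'.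
Proof. by rewrite !eBT_P mpair_PP. Qed.

Lemma eBT_period t :
  mpair (mmap ratr (eBT B t)) (eBom om B) = k3form (map_mx ratr t) om.
Proof. by rewrite eBT_P mpair_eBom /P /= scale0r subr0. Qed.

End TwistedLattices.

(* First assertion: (0,0,-1/d) pairs integrally with NS~(S,B), because the
   H^0-component a of any (a,l,b) in NS~(S,B) is divisible by d. *)
Lemma x0_dual (C : numClosedFieldType) (om : 'rV[C]_22) B d :
  br_order om B d -> dual (NSt om B) (x0 d).
Proof.
move=> Hbr; have [d_gt0 _ _] := Hbr.
have dn0 : (d%:R : rat) != 0 by rewrite pnatr_eq0 -lt0n.
split.
  exists d; split => //.
  have -> : mscale d%:R (x0 d) = (0, 0, -1).
    by rewrite /mscale /x0 /= mulr0 scaler0 mulrN mulfV.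
  apply/NSt_eq; split; first by split; rewrite ?rpred0 ?rpredN ?rpred1 //; exact: zvec0.
  by rewrite /= scale0r subr0 map_mx0 k3form0l.
move=> [[a l] b] Hw; have [[/intrP [ai /= Hai] Hl _] _] := Hw.
rewrite /mpair /x0 /= k3form0l mul0r sub0r mulrN opprK Hai.
suff /dvdzP [q ->] : (d%:Z %| ai)%Z by rewrite intrM -pmulrn mulfK //; exact: intr_int.
apply: br_order_dvd Hbr _ => t [Ht Htp]; have := perpNS_NSt Htp Hw.
rewrite /= k3formBr k3formZr => /eqP; rewrite subr_eq0 => /eqP E.
by rewrite -Hai (k3form_sym B) -E; apply: k3form_int.
Qed.

Lemma generator_shape (C : numClosedFieldType) (om : 'rV[C]_22) B d (y : mvec rat) :
  dual (Tt om B) y -> mukZ (madd (x0 d) y) ->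
  [/\ y = P B y.1.2, zvec y.1.2, perpNS om y.1.2 & isZ (k3form B y.1.2 - d%:R^-1)].
Proof.
move=> [[n [n_gt0 Hny]] _] Hz.
have Hyp : perpNSt om B y.
  move=> w Hw; have := Hny.2 w Hw; rewrite mpairZl => /eqP.
  by rewrite mulf_eq0 pnatr_eq0 (gtn_eqF n_gt0) => /eqP.
have Ey := perpNSt_shape Hyp; rewrite Ey /madd /x0 /P /= add0r in Hz.
case: Hz => _ /= yl_int; rewrite add0r addrC in yl_int * => yl_B.
by split => //; move: Hyp; rewrite {1}Ey => /perpNSt_perpNS.
Qed.

Section Generator.
Variables (C : numClosedFieldType) (om : 'rV[C]_22) (B yl : 'rV[rat]_22) (d : nat).
Hypothesis d_gt0 : (0 < d)%N.
Hypothesis alpha_d : forall t, Tr om t -> isZ (d%:R * k3form B t).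
Hypothesis yl_int : zvec yl.
Hypothesis yl_perp : perpNS om yl.
Hypothesis yl_B : isZ (k3form B yl - d%:R^-1).

Let dn0 : (d%:R : rat) != 0. Proof. by rewrite pnatr_eq0 -lt0n. Qed.

Lemma d_yl_B : isZ (d%:R * k3form B yl).
Proof.
have -> : d%:R * k3form B yl = d%:R * (k3form B yl - d%:R^-1) + 1.
  by rewrite mulrBr mulfV // subrK.
exact: rpredD (rpredM (natr_int _ _) yl_B) (rpred1 _).
Qed.

(* e^B(t) = (t - d(B,t) yl) + d(B,t) y with the first summand in T(S,B). *)
Lemma Tr_span t : Tr om t -> span_with (Tt om B) (P B yl) (eBT B t).
Proof.
move=> [t_int t_perp]; have /intrP [nt Hnt] := alpha_d (conj t_int t_perp).
have Ebt : k3form B t = nt%:~R / d%:R by rewrite -Hnt [_ * k3form B t]mulrC mulfK.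
exists (P B (t - nt%:~R *: yl)), nt; split.
  apply/Tt_P; split; first exact: zvecB (zvecZ _ yl_int).
  - rewrite k3formBr k3formZr Ebt (_ : _ - _ = - (nt%:~R * (k3form B yl - d%:R^-1))).
      by rewrite /isZ rpredN rpredM ?intr_int.
    by rewrite mulrBr opprB.
  by apply: perpNSD t_perp _; rewrite -scaleNr; exact: perpNSZ.
by rewrite eBT_P mscale_P madd_P subrK.
Qed.

Lemma span_Tr v : span_with (Tt om B) (P B yl) v -> exists2 t, Tr om t & eBT B t = v.
Proof.
move=> [u [k [Hu ->]]]; have [u_int _ u_perp] := Tt_parts Hu.
rewrite (Tt_shape Hu) mscale_P madd_P; exists (u.1.2 + k%:~R *: yl); last exact: eBT_P.
by split; [exact: zvecD (zvecZ k yl_int) | exact: perpNSD (perpNSZ _ yl_perp)].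
Qed.

(* d times any vector of <T(S,B), y> lies in T(S,B), and it pairs integrally
   with T(S,B) since its H^2-component is integral. *)
Lemma span_dual v : span_with (Tt om B) (P B yl) v -> dual (Tt om B) v.
Proof.
move=> [u [k [Hu ->]]]; have [u_int u_B u_perp] := Tt_parts Hu.
rewrite (Tt_shape Hu) mscale_P madd_P; split.
  exists d; split => //; rewrite mscale_P; apply/Tt_P.
  rewrite scalerDr scalerA mulrC -scalerA; split.
  - exact: zvecD (zvecZn _ u_int) (zvecZ k (zvecZn _ yl_int)).
  - rewrite k3formDr !k3formZr.
    exact: rpredD (rpredM (natr_int _ _) u_B) (rpredM (intr_int _ _) d_yl_B).
  - exact: perpNSD (perpNSZ _ u_perp) (perpNSZ _ (perpNSZ _ yl_perp)).
move=> m Hm; have [m_int _ _] := Tt_parts Hm.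
rewrite (Tt_shape Hm) mpair_PP k3formDl k3formZl.
exact: rpredD (k3form_int u_int m_int) (rpredM (intr_int _ _) (k3form_int yl_int m_int)).
Qed.

Lemma generator_order :
  Tt om B (mscale d%:R (P B yl)) /\
  forall k : nat, (0 < k < d)%N -> ~ Tt om B (mscale k%:R (P B yl)).
Proof.
split.
  rewrite mscale_P; apply/Tt_P; split; first exact: zvecZn.
    by rewrite k3formZr; exact: d_yl_B.
  exact: perpNSZ.
move=> k /andP [k_gt0 k_lt]; rewrite mscale_P => /Tt_P [_ kB _].
have : isZ ((k%:Z)%:~R / d%:R).
  have := rpredB kB (rpredM (natr_int _ k) yl_B).
  by rewrite k3formZr -mulrBr opprB addrC subrK pmulrn.
by move/(isZ_div_dvd d_gt0); rewrite dvdzE !absz_nat => /(dvdn_leq k_gt0); rewrite leqNgt k_lt.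
Qed.

(* The class of e^B(t) in <[y]> = Z/dZ is d(B,t) mod d, i.e. alpha(t). *)
Lemma alpha_via_generator t u (k : int) :
  Tr om t -> Tt om B u -> eBT B t = madd u (mscale k%:~R (P B yl)) ->
  exists n : int, d%:R * k3form B t = n%:~R /\ (k = n %[mod d%:Z])%Z.
Proof.
move=> Ht Hu E; have /intrP [nt Hnt] := alpha_d Ht; exists nt; split => //.
rewrite eBT_P (Tt_shape Hu) mscale_P madd_P in E.
have Et : t = u.1.2 + k%:~R *: yl := congr1 (fun v => v.1.2) E.
have [_ /intrP [mu Hmu] _] := Tt_parts Hu; have /intrP [me Hme] := yl_B.
have Ent : nt = d%:Z * (mu + k * me) + k.
  apply/eqP; rewrite -(eqr_int rat) -Hnt Et k3formDr k3formZr Hmu.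
  rewrite -[k3form B yl](subrK d%:R^-1) Hme !(intrD, intrM) -pmulrn.
  by rewrite !mulrDr [d%:R * (k%:~R * d%:R^-1)]mulrCA mulfV // mulr1 addrA.
by apply/eqP; rewrite eq_sym eqz_mod_dvd Ent addrK dvdz_mulr.
Qed.

End Generator.

Theorem lemma2p2 (C : numClosedFieldType) (om : 'rV[C]_22)
    (B : 'rV[rat]_22) (d : nat) :
  K3_period om -> br_order om B d ->
  dual (NSt om B) (x0 d) /\
  forall y : mvec rat, dual (Tt om B) y -> mukZ (madd (x0 d) y) ->
  ((* e^B maps T(S) into <T(S,B), y> *)
      (forall t, Tr om t -> span_with (Tt om B) y (eBT B t)) /\
      (* ... onto it *)
      (forall v, span_with (Tt om B) y v -> exists2 t, Tr om t & eBT B t = v) /\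
      (* ... injectively *)
      (forall t t', Tr om t -> Tr om t' -> eBT B t = eBT B t' -> t = t') /\
      (* ... isometrically *)
      (forall t t', Tr om t -> Tr om t' -> mpair (eBT B t) (eBT B t') = k3form t t') /\
      (* ... respecting Hodge structures: (2,0)-class om goes to C^x e^B(om) *)
      (exists2 c : C, c != 0 & forall t, Tr om t ->
        mpair (mmap ratr (eBT B t)) (eBom om B) = c * k3form (map_mx ratr t) om) /\
      (* <T(S,B), y> is contained in T(S,B)^vee *)
      (forall v, span_with (Tt om B) y v -> dual (Tt om B) v) /\
      (* [y] has order d in <T(S,B),y>/T(S,B) *)
      (Tt om B (mscale d%:R y) /\
        (forall k : nat, (0 < k < d)%N -> ~ Tt om B (mscale k%:R y))) /\
      (* alpha = composite T(S) -> <T(S,B),y>/T(S,B) = <[y]> = Z/dZ, [y] |-> 1 *)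
      (forall t u (k : int), Tr om t -> Tt om B u ->
        eBT B t = madd u (mscale k%:~R y) ->
        exists n : int, d%:R * k3form B t = n%:~R /\ (k = n %[mod d%:Z])%Z)).
Proof.
move=> _ Hbr; have [d_gt0 alpha_d _] := Hbr.
split; first exact: x0_dual.
move=> y Hy Hz; have [-> yl_int yl_perp yl_B] := generator_shape Hy Hz.
split; first exact: (Tr_span d_gt0 alpha_d yl_int yl_perp yl_B).
split; first exact: (span_Tr yl_int yl_perp).
split; first by move=> t t' _ _; rewrite !eBT_P => /(congr1 (fun v => v.1.2)).
split; first by move=> t t' _ _; exact: mpair_eBT.
split; first by exists 1 => [|t _]; rewrite ?oner_neq0 ?mul1r ?eBT_period.
split; first exact: (span_dual d_gt0 yl_int yl_perp yl_B).
split; first exact: (generator_order d_gt0 yl_int yl_perp yl_B).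
exact: (alpha_via_generator d_gt0 alpha_d yl_B).
Qed.
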